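(* Let $G=(V,E)$ be a finite simple graph with $V=\{x_1,\dots,x_r\}$, $E=\{e_1,\dots,e_n\}$, and suppose $(x_1,x_2,x_3)$ is a simple path of $G$ with edges $e_1=\{x_1,x_2\}$, $e_2=\{x_2,x_3\}$. Let $s=w_1x_1+w_2x_2+\cdots+w_rx_r\in\operatorname{Im}(\varphi_G)$ with $w_1<w_2$. Then the simplicial complex $\Delta^G_s$ is acyclic (all its reduced homology groups with coefficients in $\mathbb{K}$ vanish).
   Context: $\mathbb{N}[V]$ and $\mathbb{N}[E]$ denote the free commutative monoids on $V$ and on $E$, and $\varphi_G:\mathbb{N}[E]\to\mathbb{N}[V]$ is the monoid homomorphism with $\varphi_G(e_j)=x_{j_1}+x_{j_2}$ for $e_j=\{x_{j_1},x_{j_2}\}$. For $F\subseteq[n]$ put $e_F=\sum_{i\in F}e_i$, and for $s\in\mathbb{N}[V]$ let $\Delta^G_s=\{F\subseteq[n]: s-\varphi_G(e_F)\in\operatorname{Im}(\varphi_G)\}$ (here $s-\varphi_G(e_F)$ is computed in $\mathbb{Z}^V$), a simplicial complex on $[n]$. A path is a walk $(y_0,\dots,y_m)$ (consecutive vertices adjacent) whose interior vertices $y_1,\dots,y_{m-1}$ have degree exactly $2$ in $G$; a path is simple if the common neighbours of its first and last vertices all lie on the path. *)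

From HB Require Import structures.
From mathcomp Require Import all_boot all_order all_algebra.
Set Implicit Arguments. Unset Strict Implicit. Unset Printing Implicit Defensive.
Import GRing.Theory.

Definition simple_graph (r n : nat) (e : 'I_n -> {set 'I_r}) : Prop :=
  (forall j, #|e j| = 2) /\ injective e.

Definition adj (r n : nat) (e : 'I_n -> {set 'I_r}) (x y : 'I_r) : bool :=
  [exists j, e j == [set x; y]] && (x != y).

Definition deg (r n : nat) (e : 'I_n -> {set 'I_r}) (x : 'I_r) : nat :=
  #|[set j | x \in e j]|.

(* phi_G applied to an element m of N[E], evaluated at vertex v *)
Definition phiG (r n : nat) (e : 'I_n -> {set 'I_r}) (m : 'I_n -> nat)
  (v : 'I_r) : nat := \sum_(j | v \in e j) m j.

Definition in_image (r n : nat) (e : 'I_n -> {set 'I_r}) (s : 'I_r -> nat) : Prop :=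
  exists m : 'I_n -> nat, forall v, s v = phiG e m v.

(* F \in Delta^G_s : s - phi_G(e_F) \in Im(phi_G) (computed in Z^V), i.e.
   s = phi_G(e_F) + phi_G(m) for some m in N[E]. *)
Definition in_Delta (r n : nat) (e : 'I_n -> {set 'I_r}) (s : 'I_r -> nat)
  (F : {set 'I_n}) : Prop :=
  exists m : 'I_n -> nat, forall v,
    ((s v)%:Z - (#|[set j in F | v \in e j]|)%:Z = (phiG e m v)%:Z)%R.

(* simplicial (augmented) boundary map on chains indexed by subsets of [n]:
   d[F] = \sum_{i in F} (-1)^{#{j in F | j < i}} [F \ i] *)
Definition bd (K : fieldType) (n : nat) (c : {set 'I_n} -> K) : {set 'I_n} -> K :=
  fun G => (\sum_(i | i \notin G) (-1)%R ^+ #|[set j in G | (j < i)%N]| * c (i |: G))%R.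

(* A simplicial complex Delta (given as a predicate on faces) is acyclic over K:
   for every d, every (d-1)-dimensional reduced cycle (chain supported on faces
   of Delta with d elements, d = 0 being the augmentation) is a boundary of a
   chain supported on faces of Delta with d+1 elements; i.e. all reduced
   homology groups H~_{d-1}(Delta; K) vanish. *)
Definition acyclic (K : fieldType) (n : nat) (Delta : {set 'I_n} -> Prop) : Prop :=
  forall (d : nat) (c : {set 'I_n} -> K),
    (forall F, (c F != 0)%R -> Delta F /\ #|F| = d) ->
    (forall G, bd c G = 0%R) ->
    exists b : {set 'I_n} -> K,
      (forall F, (b F != 0)%R -> Delta F /\ #|F| = d.+1) /\
      (forall G, bd b G = c G).

From mathcomp Require Import all_boot all_order all_algebra.
From mathcomp Require Import zify.
Set Implicit Arguments.
Unset Strict Implicit.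
Unset Printing Implicit Defensive.
Import GRing.Theory.

(* Since x2 has degree 2, its only edges are e1 and e2, so for a face F of
   Delta not containing e2, with s - e_F = phi(m), comparing the coordinates
   at x1 and x2 gives m(e2) >= (s x2 - s x1) > 0.  Moving one copy of e2 from
   m into F shows that F + e2 is again a face: Delta is a cone with apex e2.
   A cone is acyclic, because coning off a chain with its apex is a chain
   homotopy between the identity and zero. *)

Lemma card_sepD1 (T : finType) (A : {set T}) (P : pred T) (a : T) :
  #|[set j in A | P j]| = (a \in A) && P a + #|[set j in A :\ a | P j]|.
Proof.
rewrite (cardsD1 a); congr (_ + _); first by rewrite !inE.
by apply: eq_card => x; rewrite !inE; case: (x == a).
Qed.

Lemma signr_ltn_swap (R : pzRingType) (i a X N : nat) (y : R) : i != a ->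
  ((-1) ^+ ((a < i) + X) * ((-1) ^+ ((i < a) + N) * y) =
   (-1) ^+ N * - ((-1) ^+ X * y))%R.
Proof.
move=> ia; have ltn_swap : (a < i) + (i < a) = 1.
  by move: ia; case: ltngtP => // ->; rewrite eqxx.
rewrite mulrA -exprD addnACA ltn_swap exprD expr1 mulN1r mulNr addnC exprD.
by rewrite mulrN !mulrA.
Qed.

Section Cone.

Local Open Scope ring_scope.

Variables (K : fieldType) (n : nat) (a : 'I_n).
Implicit Types (c : {set 'I_n} -> K) (F G : {set 'I_n}).

Definition cone c F : K :=
  if a \in F then (-1) ^+ #|[set j in F | (j < a)%N]| * c (F :\ a) else 0.

Lemma bd_cone c G : bd (cone c) G = c G - cone (bd c) G.
Proof.
rewrite /bd; have [aG | aG] := boolP (a \in G); last first.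
  rewrite {2}/cone (negbTE aG) subr0 (bigD1 a) // big1 => [|i /andP[_ ia]].
    rewrite /cone setU11 setU1K // (card_sepD1 (a |: G) _ a) setU11 ltnn.
    rewrite setU1K //.
    by rewrite /= addr0 signrMK.
  by rewrite /cone !inE eq_sym (negbTE ia) (negbTE aG) mulr0.
have NaN : #|[set j in G :\ a | (j < a)%N]| = #|[set j in G | (j < a)%N]|.
  by rewrite (card_sepD1 G _ a) ltnn andbF.
have notinGa i : (i \notin G :\ a) && (i != a) = (i \notin G).
  by rewrite !inE; case: (eqVneq i a) => [->|] /=; rewrite ?aG ?andbT.
rewrite [in RHS]/cone aG [in RHS](bigD1 a) ?inE ?eqxx //= setD1K // NaN.
rewrite (eq_bigl _ _ notinGa) mulrDr signrMK opprD addNKr.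
rewrite -mulrN -sumrN mulr_sumr.
apply: eq_bigr => i iG; have ia : i != a by apply: contraNneq iG => ->.
rewrite /cone in_setU1 aG orbT (card_sepD1 G _ a) aG.
rewrite (card_sepD1 (i |: G) _ i) setU11 setU1K //.
have -> : (i |: G) :\ a = i |: (G :\ a).
  by apply/setP => x; rewrite !inE; case: (eqVneq x i) => // ->; rewrite ia.
exact: signr_ltn_swap.
Qed.

Lemma cone_acyclic (Delta : {set 'I_n} -> Prop) :
  (forall F, Delta F -> Delta (a |: F)) -> acyclic K Delta.
Proof.
move=> Delta_cone d c c_supp c_cycle; exists (cone c); split => [F | G].
  rewrite /cone; case: ifP => [aF | _]; last by rewrite eqxx.
  have [-> | /c_supp[DFa cardFa] _] := eqVneq (c (F :\ a)) 0.
    by rewrite mulr0 eqxx.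
  split; first by rewrite -(setD1K aF); apply: Delta_cone.
  by rewrite (cardsD1 a) aF cardFa.
by rewrite bd_cone /cone c_cycle mulr0 if_same subr0.
Qed.

End Cone.

Section PathCone.

Variables (r n : nat) (e : 'I_n -> {set 'I_r}).

Lemma phiG_ge (m : 'I_n -> nat) (a : 'I_n) v : v \in e a -> m a <= phiG e m v.
Proof. by move=> va; rewrite /phiG (bigD1 a) //= leq_addr. Qed.

Lemma phiG_pred_at (m : 'I_n -> nat) (a : 'I_n) v : 0 < m a ->
  phiG e m v =
  phiG e (fun j => if j == a then (m j).-1 else m j) v + (v \in e a).
Proof.
move=> ma; rewrite /phiG; have [va | va] := boolP (v \in e a); last first.
  rewrite addn0; apply: eq_bigr => j vj.
  by case: eqP => // ja; rewrite -ja vj in va.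
rewrite (bigD1 a) // [in RHS](bigD1 a) //= eqxx addnAC addn1 prednK //.
by congr (_ + _); apply: eq_bigr => j /andP[_ /negbTE ->].
Qed.

Lemma in_Delta_setU1 (s : 'I_r -> nat) (F : {set 'I_n}) (a : 'I_n)
    (m : 'I_n -> nat) :
  a \notin F ->
  (forall v, ((s v)%:Z - #|[set j in F | v \in e j]|%:Z = (phiG e m v)%:Z)%R) ->
  0 < m a -> in_Delta e s (a |: F).
Proof.
move=> aF sFm ma; pose m' j := if j == a then (m j).-1 else m j.
exists m' => v; have := sFm v.
rewrite (phiG_pred_at v ma) -/m' (card_sepD1 (a |: F) _ a) setU11 setU1K //=.
by move=> sFm_v; rewrite PoszD opprD addrCA sFm_v PoszD addrC addrK.
Qed.

Lemma edges_at_deg2 (x : 'I_r) (e1 e2 : 'I_n) :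
  deg e x = 2 -> e1 != e2 -> x \in e e1 -> x \in e e2 ->
  [set j | x \in e j] = [set e1; e2].
Proof.
move=> degx ne12 xe1 xe2; apply/eqP.
rewrite eq_sym eqEcard cards2 ne12 -degx leqnn andbT.
by apply/subsetP => j; rewrite !inE => /orP[] /eqP ->.
Qed.

Lemma in_Delta_setU1_deg2 (x1 x2 : 'I_r) (e1 e2 : 'I_n) (s : 'I_r -> nat) :
  e1 != e2 -> x1 \in e e1 -> x2 \in e e1 -> x2 \in e e2 -> deg e x2 = 2 ->
  s x1 < s x2 -> forall F, in_Delta e s F -> in_Delta e s (e2 |: F).
Proof.
move=> ne12 x1e1 x2e1 x2e2 degx2 s12 F [m sFm].
have [e2F | e2F] := boolP (e2 \in F).
  by exists m; rewrite (setUidPr _) ?sub1set.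
have edges_x2 := edges_at_deg2 degx2 ne12 x2e1 x2e2.
have phi_x2 : phiG e m x2 = m e1 + m e2.
  by rewrite /phiG -big_set /= edges_x2 big_setU1 ?big_set1 ?inE.
have F_x2_le_x1 :
    #|[set j in F | x2 \in e j]| <= #|[set j in F | x1 \in e j]|.
  apply/subset_leq_card/subsetP => j; rewrite !inE => /andP[jF x2j].
  have : j \in [set j | x2 \in e j] by rewrite inE.
  rewrite edges_x2 !inE => /orP[] /eqP ej; first by rewrite jF ej.
  by move: e2F; rewrite -ej jF.
apply: (in_Delta_setU1 e2F sFm).
have := sFm x1; have := sFm x2; have := phiG_ge m x1e1; rewrite phi_x2; lia.
Qed.

End PathCone.

Theorem lemma3p6 (K : fieldType) (r n : nat) (e : 'I_n -> {set 'I_r})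
  (x1 x2 x3 : 'I_r) (e1 e2 : 'I_n) (s : 'I_r -> nat) :
  simple_graph e ->
  e1 != e2 ->
  e e1 = [set x1; x2] ->
  e e2 = [set x2; x3] ->
  (* (x1, x2, x3) is a path: its interior vertex x2 has degree exactly 2 *)
  deg e x2 = 2 ->
  (* the path is simple: common neighbours of x1 and x3 lie on the path *)
  (forall y, adj e x1 y -> adj e x3 y -> y \in [:: x1; x2; x3]) ->
  in_image e s ->
  s x1 < s x2 ->
  acyclic K (in_Delta e s).
Proof.
move=> _ ne12 e_e1 e_e2 deg_x2 _ _ s12.
apply: (cone_acyclic (a := e2)) => F.
have x1e1 : x1 \in e e1 by rewrite e_e1 !inE eqxx.
have x2e1 : x2 \in e e1 by rewrite e_e1 !inE eqxx orbT.
have x2e2 : x2 \in e e2 by rewrite e_e2 !inE eqxx.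
exact: in_Delta_setU1_deg2 ne12 x1e1 x2e1 x2e2 deg_x2 s12 F.
Qed.
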